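(* Let $\mathcal{F}=(\mathcal{F}_1,\dots,\mathcal{F}_k)$ be a generalized Galois flag of type $(s_1,\dots,s_k)$ on $\mathbb{F}_{q^n}$ with underlying Galois subflag $(\mathbb{F}_{q^{t_1}},\dots,\mathbb{F}_{q^{t_r}})$, let $\beta\in\mathbb{F}_{q^n}^\ast$ and $i\in\{1,\dots,r\}$. Then: (1) If $\beta\in\mathbb{F}_{q^{t_i}}^\ast$, then $d_S(\mathcal{F}_l,\mathcal{F}_l\beta)=0$ for every $l$ with $s_l\in\{t_i,\dots,t_r\}$. (2) If $\beta\notin\mathbb{F}_{q^{t_i}}^\ast$, then $d_S(\mathcal{F}_l,\mathcal{F}_l\beta)=2s_l$ for every $l$ with $s_l\le t_i$.
   Context: $q$ is a prime power, $\mathbb{F}_{q^n}$ is an $n$-dimensional $\mathbb{F}_q$-vector space; subspaces are $\mathbb{F}_q$-subspaces; $d_S(\mathcal{U},\mathcal{V})=\dim(\mathcal{U}+\mathcal{V})-\dim(\mathcal{U}\cap\mathcal{V})$. A flag is a chain $\{0\}\subsetneq\mathcal{F}_1\subsetneq\cdots\subsetneq\mathcal{F}_k\subsetneq\mathbb{F}_{q^n}$ of type $(\dim\mathcal{F}_1,\dots,\dim\mathcal{F}_k)$; a subflag is a flag whose subspaces all appear in the given flag. For divisors $t_1<\dots<t_r<n$ of $n$ with $t_i\mid t_{i+1}$, the Galois flag of type $(t_1,\dots,t_r)$ is $(\mathbb{F}_{q^{t_1}},\dots,\mathbb{F}_{q^{t_r}})$. A flag $\mathcal{F}$ of type $(s_1,\dots,s_k)$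 generalizes the Galois flag of type $(t_1,\dots,t_r)$ if $\{t_1,\dots,t_r\}\subsetneq\{s_1,\dots,s_k\}$, the subflag of $\mathcal{F}$ of type $(t_1,\dots,t_r)$ is that Galois flag, and at least one subspace of $\mathcal{F}$ is not a subfield; such $\mathcal{F}$ is a generalized Galois flag. Its underlying Galois subflag is its longest Galois subflag (the subflag formed by all its subspaces that are subfields of $\mathbb{F}_{q^n}$). *)

From HB Require Import structures.
From mathcomp Require Import all_boot all_order all_algebra all_field.
Set Implicit Arguments. Unset Strict Implicit. Unset Printing Implicit Defensive.
Import GRing.Theory.
Local Open Scope ring_scope.

(* Setting: F = F_q (a finite field, q = #|F|), L = F_{q^n} a finite-dimensional
   field extension of F, n = \dim {:L}.  Subspaces are F-subspaces {vspace L}. *)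

Section Defs.
Variables (F : finFieldType) (L : fieldExtType F).

Definition in_Fqt (t : nat) (x : L) : bool := x ^+ (#|F| ^ t) == x.

Definition dS (U V : {vspace L}) : nat := (\dim (U + V) - \dim (U :&: V))%N.

Definition vmulr (U : {vspace L}) (beta : L) : {vspace L} := (U * <[beta]>)%VS.

Definition is_subfield (U : {vspace L}) : bool := is_aspace U.

Definition is_flag (k : nat) (Fl : 'I_k -> {vspace L}) : Prop :=
  (forall l : 'I_k, (0 < \dim (Fl l))%N /\ (\dim (Fl l) < \dim {:L})%N) /\
  (forall l1 l2 : 'I_k, (l1 < l2)%N -> (Fl l1 <= Fl l2)%VS /\ Fl l1 != Fl l2).

Definition galois_type (r : nat) (t : 'I_r -> nat) : Prop :=
  (forall i : 'I_r, [/\ (0 < t i)%N, (t i %| \dim {:L})%N & (t i < \dim {:L})%N]) /\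
  (forall i j : 'I_r, (i < j)%N -> (t i < t j)%N /\ (t i %| t j)%N).

(* The flag Fl (of type s_l = \dim (Fl l)) generalizes the Galois flag of type t *)
Definition generalizes_galois (k : nat) (Fl : 'I_k -> {vspace L})
    (r : nat) (t : 'I_r -> nat) : Prop :=
  [/\ is_flag Fl, galois_type t,
      (forall i : 'I_r, exists l : 'I_k, \dim (Fl l) = t i) /\
      (exists l : 'I_k, forall i : 'I_r, \dim (Fl l) <> t i),
      (forall (i : 'I_r) (l : 'I_k), \dim (Fl l) = t i ->
         forall x : L, (x \in Fl l) = in_Fqt (t i) x)
    &
      (exists l : 'I_k, ~~ is_subfield (Fl l))].

(* Fl is a generalized Galois flag whose underlying (longest) Galois subflag
   is the Galois flag of type t: the subspaces of Fl that are subfields are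
   exactly those of dimensions t_1, ..., t_r. *)
Definition underlying_galois (k : nat) (Fl : 'I_k -> {vspace L})
    (r : nat) (t : 'I_r -> nat) : Prop :=
  generalizes_galois Fl t /\
  (forall l : 'I_k, is_subfield (Fl l) -> exists i : 'I_r, \dim (Fl l) = t i).

End Defs.

From HB Require Import structures.
From mathcomp Require Import all_boot all_order all_algebra all_field.
Set Implicit Arguments. Unset Strict Implicit. Unset Printing Implicit Defensive.
Import GRing.Theory.
Local Open Scope ring_scope.

(* A subfield F_{q^t} is closed under products and inverses, so multiplying by
   a nonzero beta in it maps each subspace of the Galois flag from F_{q^t}
   upwards onto itself.  If beta is not in F_{q^t}, then for any subspace U of
   F_{q^t} a common element x = u beta of U and U beta with u <> 0 would give
   beta = x / u in F_{q^t}; hence U and U beta intersect trivially and their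
   distance is 2 dim U. *)

Section SubfieldMembership.
Variables (F : finFieldType) (L : fieldExtType F).

Lemma in_Fqt_mul t (x y : L) : in_Fqt t x -> in_Fqt t y -> in_Fqt t (x * y).
Proof. by rewrite /in_Fqt exprMn => /eqP-> /eqP->. Qed.

Lemma in_Fqt_inv t (x : L) : in_Fqt t x -> in_Fqt t x^-1.
Proof. by rewrite /in_Fqt exprVn => /eqP->. Qed.

Lemma in_Fqt_dvdn s t (x : L) : (s %| t)%N -> in_Fqt s x -> in_Fqt t x.
Proof.
move=> /dvdnP[m ->] /eqP xs; rewrite /in_Fqt mulnC expnM.
by elim: m => [|m IHm]; rewrite ?expr1 // expnS exprM xs.
Qed.

End SubfieldMembership.

Section SubspaceDistance.
Variables (F : finFieldType) (L : fieldExtType F).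
Implicit Types (U : {vspace L}) (beta : L).

Lemma dS_refl U : dS U U = 0%N.
Proof. by rewrite /dS addvv capvv subnn. Qed.

Lemma dim_vmulr U beta : beta != 0 -> \dim (vmulr U beta) = \dim U.
Proof. by move=> nz_beta; rewrite dim_cosetv_unit // unitfE. Qed.

Lemma vmulr_id U beta : beta != 0 ->
  {in U, forall u, u * beta \in U} -> vmulr U beta = U.
Proof.
move=> nz_beta Ubeta; apply/eqP; rewrite eqEdim dim_vmulr // leqnn andbT.
by apply/subvP=> x /memv_cosetP[u Uu ->]; apply: Ubeta.
Qed.

Lemma dS_vmulr_cap0 U beta : beta != 0 -> (U :&: vmulr U beta = 0)%VS ->
  dS U (vmulr U beta) = (2 * \dim U)%N.
Proof.
move=> nz_beta cap0; rewrite /dS cap0 dimv0 subn0.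
have := dimv_sum_cap U (vmulr U beta).
by rewrite cap0 dimv0 addn0 dim_vmulr // addnn mul2n.
Qed.

Lemma capv_vmulr_eq0 t U beta : {in U, forall u, in_Fqt t u} ->
  ~~ in_Fqt t beta -> (U :&: vmulr U beta = 0)%VS.
Proof.
move=> Ut beta_t; apply/eqP; rewrite -subv0; apply/subvP=> x.
rewrite memv_cap memv0 => /andP[Ux /memv_cosetP[u Uu def_x]].
have [u0 | nz_u] := eqVneq u 0; first by rewrite def_x u0 mul0r.
have def_beta : beta = x * u^-1 by rewrite def_x mulrAC divff // mul1r.
by move: beta_t; rewrite def_beta in_Fqt_mul ?in_Fqt_inv ?Ut.
Qed.

End SubspaceDistance.

Section Flags.
Variables (F : finFieldType) (L : fieldExtType F).

Lemma galois_type_dvdn r (t : 'I_r -> nat) (i j : 'I_r) :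
  @galois_type F L r t -> (i <= j)%N -> (t i %| t j)%N.
Proof.
move=> [_ t_incr]; rewrite leq_eqVlt => /orP[/eqP/val_inj-> // | ltij].
by case: (t_incr _ _ ltij).
Qed.

Lemma flag_subv_dim k (Fl : 'I_k -> {vspace L}) (l m : 'I_k) :
  is_flag Fl -> (\dim (Fl l) <= \dim (Fl m))%N -> (Fl l <= Fl m)%VS.
Proof.
move=> [_ Fl_chain] le_dim; case: (ltngtP l m) => [ltlm | ltml | /val_inj-> //].
  by case: (Fl_chain _ _ ltlm).
have [subml neqml] := Fl_chain _ _ ltml.
by move: neqml; rewrite eqEdim subml le_dim.
Qed.

End Flags.

Theorem mainTheorem4 (F : finFieldType) (L : fieldExtType F)
    (k : nat) (Fl : 'I_k -> {vspace L}) (r : nat) (t : 'I_r -> nat)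
    (beta : L) (i : 'I_r) :
  underlying_galois Fl t ->
  beta != 0 ->
  (in_Fqt (t i) beta ->
     forall l : 'I_k, (exists j : 'I_r, (i <= j)%N /\ \dim (Fl l) = t j) ->
       dS (Fl l) (vmulr (Fl l) beta) = 0%N) /\
  (~~ in_Fqt (t i) beta ->
     forall l : 'I_k, (\dim (Fl l) <= t i)%N ->
       dS (Fl l) (vmulr (Fl l) beta) = (2 * \dim (Fl l))%N).
Proof.
move=> [[Fl_flag t_galois [t_in_s _] Fl_galois _] _] nz_beta; split.
  move=> beta_ti l [j [le_ij dim_l]].
  have beta_tj := in_Fqt_dvdn (galois_type_dvdn t_galois le_ij) beta_ti.
  rewrite vmulr_id ?dS_refl // => u; rewrite !(Fl_galois j l dim_l).
  by move=> u_tj; apply: in_Fqt_mul.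
move=> beta_ti l le_l_ti.
have [m dim_m] := t_in_s i.
have sub_lm : (Fl l <= Fl m)%VS by apply: flag_subv_dim; rewrite ?dim_m.
apply/dS_vmulr_cap0/(capv_vmulr_eq0 _ beta_ti) => // u /(subvP sub_lm).
by rewrite (Fl_galois i m dim_m).
Qed.
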